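(* Let $g^{ij}(u)=\sum_{s,k}\frac{1-\delta^{sk}}{p_sp_k}\frac{\partial u_i}{\partial p_s}\frac{\partial u_j}{\partial p_k}$, viewed as a polynomial in $u_1,\dots,u_n$. The Lie derivative of this intersection form with respect to the vector field $\frac{\partial}{\partial u_{n-1}}$ is given by $$\eta^{ij}(u)=\frac{\partial g^{ij}}{\partial u_{n-1}}(u)=4(2n-i-j)\,u_{i+j-n-1},\qquad i,j=1,\dots,n.$$ Hence $\eta^{ij}(u)$ is a non-degenerate Hankel matrix with all entries above the anti-diagonal vanishing; in particular the anti-diagonal entries are $\eta^{i,n-i+1}(u)=4(n-1)$.
   Context: $n\ge2$. $u_k=\sum_{1\le i_1<\dots<i_k\le n}p_{i_1}^2\cdots p_{i_k}^2$ for $k=1,\dots,n$; conventions $u_0=1$ and $u_k=0$ for $k<0$ and $k>n$. ''Above the anti-diagonal'' means entries with $i+j<n+1$. *)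

From HB Require Import structures.
From mathcomp Require Import all_boot all_order all_algebra.
From mathcomp Require Export mpoly.
Set Implicit Arguments. Unset Strict Implicit. Unset Printing Implicit Defensive.
Import Order.TTheory GRing.Theory Num.Theory.
Local Open Scope ring_scope.

Section Defs.
Variable R : numFieldType.
Variable n : nat.

(* u_k as a polynomial in p_1..p_n (variables 'X_0..'X_(n-1)):
   u_k = sum_{|S| = k} prod_{s in S} p_s^2, with u_k = 0 for k < 0
   (for k = 0 this is 1, for k > n it is 0 automatically). *)
Definition u_poly (k : int) : {mpoly R[n]} :=
  match k with
  | Posz k' => \sum_(S : {set 'I_n} | #|S| == k') \prod_(s in S) 'X_s ^+ 2
  | Negz _ => 0
  end.

(* The point (u_1(p), ..., u_n(p)) ; coordinate m : 'I_n is u_(m+1). *)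
Definition uvec (p : 'I_n -> R) : 'I_n -> R :=
  fun m => (u_poly (m.+1)%:Z).@[p].

Definition gfun (i j : nat) (p : 'I_n -> R) : R :=
  \sum_(s < n) \sum_(k < n)
    (1 - (s == k)%:R) / (p s * p k)
      * ((u_poly i%:Z)^`M(s)).@[p] * ((u_poly j%:Z)^`M(k)).@[p].

(* The variable u_k in the polynomial ring in u_1..u_n (variable 'X_m is
   u_(m+1)), with the conventions u_0 = 1 and u_k = 0 for k < 0 or k > n. *)
Definition Uvar (k : int) : {mpoly R[n]} :=
  if k == 0 then 1 else \sum_(m : 'I_n | (m.+1)%:Z == k) 'X_m.

Definition eta_formula (i j : nat) : {mpoly R[n]} :=
  (4 * (2 * n - i - j)%N)%:R *: Uvar (i%:Z + j%:Z - n%:Z - 1).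

End Defs.

Lemma nm2_lt (n : nat) (hn : (2 <= n)%N) : (n - 2 < n)%N.
Proof. by rewrite ltn_subrL; case: n hn => [|[|n]]. Qed.

(* The index of the variable u_(n-1) (0-based index n-2). *)
Definition ord_nm1 (n : nat) (hn : (2 <= n)%N) : 'I_n := Ordinal (nm2_lt hn).

From HB Require Import structures.
From mathcomp Require Import all_boot all_order all_algebra.
From mathcomp Require Import mpoly.
From mathcomp Require Import perm ring zify.
Import Order.TTheory GRing.Theory Num.Theory.
Local Open Scope ring_scope.

(* With x_s = p_s^2 one has du_{k+1}/dp_s = 2 p_s e_k(x without x_s), so the
   factors 1/(p_s p_k) cancel and g^{(a+1)(b+1)} is 4 times
   (n-a)(n-b) u_a u_b - sum_s e_a(x without x_s) e_b(x without x_s).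
   The recursion e_{k+1}(x without x_s) = u_{k+1} - x_s e_k(x without x_s)
   turns the last sum into an explicit quadratic polynomial in the u's, which
   is linear in u_{n-1} with coefficient 4(2n-i-j) u_{i+j-n-1}.  It is the only
   polynomial with the prescribed values: composed with the elementary
   symmetric polynomials, a polynomial vanishing at every (u_1(p), ..., u_n(p))
   vanishes at infinitely many points of a Kronecker curve (t^(D^i))_i, hence
   is zero.  Since eta vanishes above the anti-diagonal, reversing its columns
   gives a triangular matrix with diagonal 4(n-1). *)

Lemma big_card_setU1 (V : nmodType) (T : finType) (s : T) k (F : {set T} -> V) :
  \sum_(S : {set T} | (#|S| == k.+1) && (s \in S)) F S =
  \sum_(S : {set T} | (#|S| == k) && (s \notin S)) F (s |: S).
Proof.
rewrite (reindex_onto (fun S => s |: S) (fun S => S :\ s)) /=; last first.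
  by move=> S /andP[_ sS]; rewrite setD1K.
apply: eq_bigl => S; rewrite in_setU1 eqxx /= andbT cardsU1.
have [sS|nsS] /= := boolP (s \in S); last by rewrite add1n eqSS setU1K ?eqxx ?andbT.
rewrite andbF; apply/negbTE/andP => -[_ /eqP eS].
by rewrite -eS !inE eqxx in sS.
Qed.

Lemma sum_ord_indicator (R : ringType) (V : lmodType R) (a c : nat) (F : nat -> V) :
  \sum_(t < a) (t == c :> nat)%:R *: F t = (c < a)%N%:R *: F c.
Proof.
have [ltca|leac] := ltnP c a; last first.
  rewrite scale0r big1 // => t _.
  by rewrite ltn_eqF ?scale0r // (leq_trans (ltn_ord t)).
rewrite scale1r (bigD1 (Ordinal ltca)) //= eqxx scale1r big1 ?addr0 // => t tc.
rewrite (_ : (t == c :> nat) = false) ?scale0r //.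
by apply: contraNF tc => /eqP tc; apply/eqP/val_inj.
Qed.

Lemma sum_offdiag (R : ringType) (n : nat) (A B : 'I_n -> R) :
  \sum_s \sum_t (1 - (s == t)%:R) * (A s * B t) =
  (\sum_s A s) * (\sum_t B t) - \sum_s A s * B s.
Proof.
rewrite mulr_suml -sumrB; apply: eq_bigr => s _.
rewrite (bigD1 s) //= eqxx subrr mul0r add0r [in RHS](bigD1 s) //=.
rewrite mulrDr addrAC subrr add0r mulr_sumr; apply: eq_bigr => t ts.
by rewrite eq_sym (negbTE ts) subr0 mul1r.
Qed.

Section ElementarySymmetric.
Variables (R : comRingType) (n : nat) (x : 'I_n -> R).

Definition elem_sym (k : nat) : R :=
  \sum_(S : {set 'I_n} | #|S| == k) \prod_(s in S) x s.

Definition elem_sym_omit (s : 'I_n) (k : nat) : R :=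
  \sum_(S : {set 'I_n} | (#|S| == k) && (s \notin S)) \prod_(t in S) x t.

Lemma elem_sym0 : elem_sym 0 = 1.
Proof. by rewrite /elem_sym (big_pred1 set0) ?big_set0 // => S; rewrite cards_eq0. Qed.

Lemma elem_sym_omit0 s : elem_sym_omit s 0 = 1.
Proof.
rewrite /elem_sym_omit (big_pred1 set0) ?big_set0 // => S /=.
by rewrite cards_eq0; case: eqP => // ->; rewrite inE.
Qed.

Lemma elem_sym_eq0 k : (n < k)%N -> elem_sym k = 0.
Proof.
move=> ltnk; rewrite /elem_sym big_pred0 // => S; apply/negbTE/eqP => cardS.
by have := max_card S; rewrite card_ord cardS leqNgt ltnk.
Qed.

Lemma elem_sym_omitS s k :
  elem_sym_omit s k.+1 = elem_sym k.+1 - x s * elem_sym_omit s k.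
Proof.
apply/eqP; rewrite eq_sym subr_eq /elem_sym (bigID (fun S : {set 'I_n} => s \in S)).
rewrite /= addrC big_card_setU1 /elem_sym_omit mulr_sumr; apply/eqP; congr (_ + _).
by apply: eq_bigr => S /andP[_ sS]; rewrite big_setU1.
Qed.

Lemma sum_elem_sym_omit k :
  \sum_s elem_sym_omit s k = (n%:Z - k%:Z)%:~R * elem_sym k.
Proof.
rewrite /elem_sym_omit (exchange_big_dep (fun S : {set 'I_n} => #|S| == k)) /=;
  last by move=> s S _ /andP[].
rewrite /elem_sym mulr_sumr; apply: eq_bigr => S /eqP cardS.
under eq_bigl => s do rewrite cardS eqxx -in_setC.
rewrite sumr_const -mulr_natl; congr (_ * _).
have := cardsC S; rewrite card_ord cardS => cardCS.
by rewrite -[_%:R]/((#|~: S|%:Z)%:~R : R); congr (_%:~R); lia.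
Qed.

Definition elem_sym_omit_dot (a b : nat) : R :=
  \sum_s elem_sym_omit s a * elem_sym_omit s b.

Lemma elem_sym_omit_dotS a b : elem_sym_omit_dot a.+1 b =
  (n%:Z - b%:Z)%:~R * elem_sym a.+1 * elem_sym b
  - (n%:Z - a%:Z)%:~R * elem_sym a * elem_sym b.+1 + elem_sym_omit_dot a b.+1.
Proof.
have expand s : elem_sym_omit s a.+1 * elem_sym_omit s b =
    elem_sym a.+1 * elem_sym_omit s b - elem_sym b.+1 * elem_sym_omit s a
    + elem_sym_omit s a * elem_sym_omit s b.+1.
  by rewrite !elem_sym_omitS; ring.
rewrite /elem_sym_omit_dot (eq_bigr _ (fun s _ => expand s)) big_split sumrB /=.
by rewrite -!mulr_sumr !sum_elem_sym_omit; ring.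
Qed.

Lemma elem_sym_omit_dotE a b : elem_sym_omit_dot a b =
  (n%:Z - b%:Z)%:~R * elem_sym a * elem_sym b +
  \sum_(t < a) (a%:Z - b%:Z - 2 * t.+1%:Z)%:~R
                 * elem_sym (a - t.+1) * elem_sym (b + t.+1).
Proof.
elim: a b => [|a IHa] b.
  rewrite big_ord0 addr0 elem_sym0 mulr1 -sum_elem_sym_omit.
  by apply: eq_bigr => s _; rewrite elem_sym_omit0 mul1r.
rewrite elem_sym_omit_dotS IHa big_ord_recl subn1 addn1 /=.
have shift : \sum_(t < a) (a.+1%:Z - b%:Z - 2 * (bump 0 t).+1%:Z)%:~R
      * elem_sym (a.+1 - (bump 0 t).+1) * elem_sym (b + (bump 0 t).+1) =
    \sum_(t < a) (a%:Z - b.+1%:Z - 2 * t.+1%:Z)%:~R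
      * elem_sym (a - t.+1) * elem_sym (b.+1 + t.+1).
  apply: eq_bigr => t _; rewrite /bump add1n subSS addSnnS.
  by congr (_%:~R * _ * _); lia.
have coef : (a.+1%:Z - b%:Z - 2 * 1%:Z)%:~R
    = (n%:Z - b.+1%:Z)%:~R - (n%:Z - a%:Z)%:~R :> R.
  by rewrite -rmorphB; congr (_%:~R); lia.
by rewrite shift coef; ring.
Qed.

End ElementarySymmetric.

Arguments elem_sym {R n} x k.
Arguments elem_sym_omit {R n} x s k.
Arguments elem_sym_omit_dot {R n} x a b.

Lemma meval_mesym (R : comRingType) (n : nat) (x : 'I_n -> R) k :
  (mesym n R k).@[x] = elem_sym x k.
Proof.
rewrite mesymE raddf_sum /=; apply: eq_bigr => S _.
rewrite mevalX (big_mkcond (fun i => i \in S)) /=; apply: eq_bigr => i _.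
by rewrite mnmE; case: (i \in S).
Qed.

Section MPolyDeriv.
Variables (R : ringType) (n : nat).
Implicit Types (s t : 'I_n).

Lemma mderivXU s t : ('X_t : {mpoly R[n]})^`M(s) = (t == s)%:R.
Proof.
rewrite mderivX mnm1E; have [<-|_] := eqVneq t s; last by rewrite scale0r.
suff -> : (U_(t) - U_(t))%MM = 0%MM by rewrite scale1r mpolyX0.
by apply/mnmP => i; rewrite mnmBE subnn mnm0E.
Qed.

Lemma mderiv_prod_sq_notin s (S : {set 'I_n}) : s \notin S ->
  (\prod_(t in S) ('X_t : {mpoly R[n]}) ^+ 2)^`M(s) = 0.
Proof.
move=> sS; apply: (big_ind (fun P : {mpoly R[n]} => P^`M(s) = 0)).
- by rewrite -mpolyC1 mderivC.
- by move=> P Q dP dQ; rewrite mderivM dP dQ mul0r mulr0 addr0.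
- move=> t tS; rewrite expr2 mderivM mderivXU.
  have [ts|_] := eqVneq t s; last by rewrite mul0r mulr0 addr0.
  by rewrite -ts tS in sS.
Qed.

End MPolyDeriv.

Lemma base_digits_inj (D k : nat) (f g : 'I_k -> nat) :
  (forall i, f i < D)%N -> (forall i, g i < D)%N ->
  (\sum_(i < k) D ^ i * f i = \sum_(i < k) D ^ i * g i)%N -> f =1 g.
Proof.
elim: k f g => [|k IHk] f g ltfD ltgD; first by move=> _ [].
have shift (h : 'I_k.+1 -> nat) :
    (\sum_(i < k) D ^ (bump 0 i) * h (lift ord0 i) =
     D * \sum_(i < k) D ^ i * h (lift ord0 i))%N.
  by rewrite big_distrr; apply: eq_bigr => i _; rewrite /bump /= add1n expnS mulnA.
rewrite !big_ord_recl /= !expn0 !mul1n !shift => digitsE.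
have f0 : f ord0 = g ord0.
  have := congr1 (modn^~ D) digitsE.
  by rewrite /= addnC [(g ord0 + _)%N]addnC ![(D * _)%N]mulnC !modnMDl !modn_small.
have D_gt0 : (0 < D)%N by apply: leq_ltn_trans (ltfD ord0).
move: digitsE; rewrite f0 => /addnI /eqP; rewrite eqn_pmul2l // => /eqP tailE.
have {}IHk := IHk _ _ (fun i => ltfD _) (fun i => ltgD _) tailE.
by move=> i; case: (unliftP ord0 i) => [j ->|->].
Qed.

Section Kronecker.
Variables (R : idomainType) (n : nat).
Implicit Type Q : {mpoly R[n]}.

Definition kronecker (D : nat) Q : {poly R} :=
  \sum_(m <- msupp Q) Q@_m *: 'X^(\sum_(i < n) D ^ i * m i).

Lemma horner_kronecker D Q x : (kronecker D Q).[x] = Q.@[fun i => x ^+ (D ^ i)].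
Proof.
rewrite mevalE /kronecker horner_sum; apply: eq_bigr => m _.
rewrite hornerZ hornerXn -prodrXr; congr (_ * _).
by apply: eq_bigr => i _; rewrite exprM.
Qed.

Lemma kronecker_eq0 Q : kronecker (msize Q) Q = 0 -> Q = 0.
Proof.
set D := msize Q => QD0; apply/eqP; rewrite -msupp_eq0; apply/eqP.
case suppQ: (msupp Q) => [|m0 s] //.
have m0Q : m0 \in msupp Q by rewrite suppQ inE eqxx.
have ltD m i : m \in msupp Q -> (m i < D)%N.
  move=> mQ; apply: leq_ltn_trans (msize_mdeg_lt mQ).
  by rewrite mdegE (bigD1 i) //= leq_addr.
have := congr1 (fun P : {poly R} => P`_(\sum_(i < n) D ^ i * m0 i)) QD0.
rewrite /kronecker coef_sum coef0 (bigD1_seq m0) ?msupp_uniq //= coefZ coefXn.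
rewrite eqxx mulr1 big_seq_cond big1 ?addr0 => [Qm0|m /andP[mQ mm0]]; last first.
  rewrite coefZ coefXn; case: eqP => [digitsE|]; last by rewrite mulr0.
  case/eqP: mm0; apply/mnmP => i.
  exact: (@base_digits_inj D n (fun i => m i) (fun i => m0 i)
    (fun i => ltD m i mQ) (fun i => ltD m0 i m0Q) (esym digitsE) i).
by move: m0Q; rewrite mcoeff_msupp Qm0 eqxx.
Qed.

Lemma mpoly_eq0_kronecker Q (xs : nat -> R) : injective xs ->
  (forall c, Q.@[fun i => xs c ^+ (msize Q ^ i)] = 0) -> Q = 0.
Proof.
move=> xs_inj Q0; apply: kronecker_eq0; set P := kronecker _ Q.
apply/eqP/negPn/negP => nzP; set rs := map xs (iota 0 (size P)).
have rootP : all (root P) rs.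
  by apply/allP => _ /mapP[c _ ->]; rewrite /root horner_kronecker Q0.
have uniq_rs : uniq rs by rewrite map_inj_uniq // iota_uniq.
by have := max_poly_roots nzP rootP uniq_rs; rewrite size_map size_iota ltnn.
Qed.

End Kronecker.

Lemma det_antitrig_neq0 (R : idomainType) (n : nat) (A : 'M[R]_n) :
  (forall i j : 'I_n, ((i + j).+1 < n)%N -> A i j = 0) ->
  (forall i : 'I_n, A i (rev_ord i) != 0) -> \det A != 0.
Proof.
move=> A0 Arev; pose s := perm (@rev_ord_inj n).
have trigA : is_trig_mx (col_perm s A).
  by apply/is_trig_mxP => i j ltij; rewrite mxE permE A0 //=; have := ltn_ord j; lia.
have : \det (col_perm s A) != 0.
  by rewrite det_trig //; apply/prodf_neq0 => i _; rewrite mxE permE.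
by apply: contraNneq => detA0; rewrite col_permE det_mulmx detA0 mul0r.
Qed.

Section IntersectionForm.
Variables (R : numFieldType) (n : nat).
Implicit Types (p : 'I_n -> R) (s : 'I_n).
Local Notation u k := (Uvar R n k%:Z).

Definition sqrv p : 'I_n -> R := fun i => p i ^+ 2.

Lemma meval_u_poly p k : (u_poly R n k%:Z).@[p] = elem_sym (sqrv p) k.
Proof.
rewrite /u_poly /elem_sym raddf_sum /=; apply: eq_bigr => S _.
by rewrite rmorph_prod; apply: eq_bigr => s _; rewrite rmorphXn /= mevalXU.
Qed.

Lemma meval_mderiv_u_poly p k s :
  ((u_poly R n k.+1%:Z)^`M(s)).@[p] = 2 * p s * elem_sym_omit (sqrv p) s k.
Proof.
rewrite /u_poly [X in X.@[_]]raddf_sum /= (bigID (fun S : {set 'I_n} => s \in S)) /=.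
rewrite [X in _ + X]big1 ?addr0 => [|S /andP[_]]; last exact: mderiv_prod_sq_notin.
rewrite big_card_setU1 !raddf_sum /= mulr_sumr; apply: eq_bigr => S /andP[_ sS].
rewrite big_setU1 //= mderivM mderiv_prod_sq_notin // mulr0 addr0.
rewrite expr2 mderivM mderivXU eqxx mul1r mulr1 mevalM mevalD mevalXU mulr2n.
rewrite rmorph_prod /=; congr (_ * _); first by rewrite mulrDl mul1r.
by apply: eq_bigr => t _; rewrite rmorphXn /= mevalXU.
Qed.

Lemma gfunE p a b : (forall s, p s != 0) ->
  gfun a.+1 b.+1 p = 4 * ((n%:Z - a%:Z)%:~R * elem_sym (sqrv p) a
    * ((n%:Z - b%:Z)%:~R * elem_sym (sqrv p) b) - elem_sym_omit_dot (sqrv p) a b).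
Proof.
move=> p_neq0; rewrite /gfun.
have term s t : (1 - (s == t)%:R) / (p s * p t) * ((u_poly R n a.+1%:Z)^`M(s)).@[p]
      * ((u_poly R n b.+1%:Z)^`M(t)).@[p] =
    4 * ((1 - (s == t)%:R)
         * (elem_sym_omit (sqrv p) s a * elem_sym_omit (sqrv p) t b)).
  by rewrite !meval_mderiv_u_poly; field; rewrite !p_neq0.
under eq_bigr => s _ do under eq_bigr => t _ do rewrite term.
under eq_bigr => s _ do rewrite -mulr_sumr.
by rewrite -mulr_sumr sum_offdiag !sum_elem_sym_omit.
Qed.

Lemma meval_Uvar p k : (u k).@[uvec p] = elem_sym (sqrv p) k.
Proof.
case: k => [|k]; first by rewrite /Uvar eqxx meval1 elem_sym0.
rewrite /Uvar /=; have [ltkn|lenk] := ltnP k n.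
  rewrite (big_pred1 (Ordinal ltkn)) => [|m]; last by rewrite /= eqz_nat eqSS.
  by rewrite mevalXU /uvec meval_u_poly.
rewrite big_pred0 ?meval0 ?elem_sym_eq0 // => m.
by rewrite /= eqz_nat eqSS; apply/negbTE; rewrite neq_ltn (leq_trans (ltn_ord m)).
Qed.

Lemma mderiv_Uvar k (m : 'I_n) : (u k)^`M(m) = (k == m.+1)%:R.
Proof.
case: k => [|k]; first by rewrite /Uvar eqxx -mpolyC1 mderivC.
rewrite /Uvar /= raddf_sum /= eqSS; have [->|km] := eqVneq k m.
  by rewrite (big_pred1 m) ?mderivXU ?eqxx // => m'; rewrite /= eqz_nat eqSS.
rewrite big1 // => m' /eqP [m'k]; rewrite mderivXU.
by case: eqP => // m'm; rewrite -m'k m'm eqxx in km.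
Qed.

Lemma Uvar_lt0 (z : int) : z < 0 -> Uvar R n z = 0.
Proof.
move=> z_lt0; rewrite /Uvar (negbTE (ltr0_neq0 z_lt0)) big_pred0 // => m.
by apply/negbTE; apply: contraTneq z_lt0 => <-.
Qed.

Definition gpoly (a b : nat) : {mpoly R[n]} :=
  4 *: (((n%:Z - a%:Z - 1) * (n%:Z - b%:Z))%:~R *: (u a * u b) +
    \sum_(t < a) (b%:Z - a%:Z + 2 * t.+1%:Z)%:~R *: (u (a - t.+1) * u (b + t.+1))).

Lemma gfun_gpoly p a b : (forall s, p s != 0) ->
  gfun a.+1 b.+1 p = (gpoly a b).@[uvec p].
Proof.
move=> p_neq0; rewrite gfunE // elem_sym_omit_dotE /gpoly.
rewrite mevalZ mevalD mevalZ mevalM !meval_Uvar raddf_sum /=.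
set e := elem_sym (sqrv p).
have sumN : \sum_(t < a) ((b%:Z - a%:Z + 2 * t.+1%:Z)%:~R *:
      (u (a - t.+1) * u (b + t.+1))).@[uvec p] =
    - \sum_(t < a) (a%:Z - b%:Z - 2 * t.+1%:Z)%:~R * e (a - t.+1)%N * e (b + t.+1)%N.
  rewrite -sumrN; apply: eq_bigr => t _.
  rewrite mevalZ mevalM !meval_Uvar mulrA -mulNr -mulNr -rmorphN.
  by congr (_%:~R * _ * _); lia.
by rewrite sumN !rmorphB !rmorphM /=; ring.
Qed.

Lemma mderiv_gpoly a b (m : 'I_n) : m.+1 = n.-1 -> (a < n)%N -> (b < n)%N ->
  (gpoly a b)^`M(m) = eta_formula R n a.+1 b.+1.
Proof.
move=> mE ltan ltbn; rewrite /gpoly mderivZ mderivD mderivZ mderivM !mderiv_Uvar mE.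
set cA := ((n%:Z - a%:Z - 1) * (n%:Z - b%:Z))%:~R : R.
have diag : cA *: ((a == n.-1)%:R * u b + u a * (b == n.-1)%:R) =
    (b == n.-1)%:R *: (cA *: u a).
  have [an1|_] := eqVneq a n.-1; last first.
    by rewrite mul0r add0r mulr_natr -scaler_nat !scalerA mulrC.
  by rewrite [cA](_ : _ = 0) ?scale0r ?scaler0 // /cA (_ : _ - 1 = 0) ?mul0r //; lia.
have offdiag (t : 'I_a) :
    ((b%:Z - a%:Z + 2 * t.+1%:Z)%:~R *: (u (a - t.+1) * u (b + t.+1)))^`M(m) =
    ((b + t.+1)%N == n.-1)%:R *: ((b%:Z - a%:Z + 2 * t.+1%:Z)%:~R *: u (a - t.+1)).
  rewrite mderivZ mderivM !mderiv_Uvar mE (_ : ((a - t.+1)%N == n.-1) = false).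
    by rewrite mul0r add0r mulr_natr -scaler_nat !scalerA mulrC.
  by have := ltn_ord t; lia.
rewrite raddf_sum /= diag (eq_bigr _ (fun t _ => offdiag t)) /eta_formula.
have [bn1|bn1] := eqVneq b n.-1.
  rewrite big1 => [|t _]; last first.
    by rewrite (_ : ((b + t.+1)%N == n.-1) = false) ?scale0r //; lia.
  rewrite addr0 scale1r scalerA (_ : a.+1%:Z + b.+1%:Z - n%:Z - 1 = a); last by lia.
  by congr (_ *: _); rewrite /cA !pmulrn -intrM; congr _%:~R; lia.
set c := (n.-1 - b.+1)%N.
rewrite scale0r add0r (eq_bigr (fun t : 'I_a => (t == c :> nat)%:R *:
    ((b%:Z - a%:Z + 2 * t.+1%:Z)%:~R *: u (a - t.+1)))) => [|t _]; last first.
  by congr (_%:R *: _); rewrite /c; apply/eqP/eqP; lia.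
rewrite (@sum_ord_indicator _ _ a c
  (fun t : nat => (b%:Z - a%:Z + 2 * t.+1%:Z)%:~R *: u (a - t.+1))).
have [ltca|leac] := ltnP c a; last first.
  by rewrite scale0r scaler0 [in RHS]Uvar_lt0 ?scaler0 //; rewrite /c in leac; lia.
rewrite scale1r scalerA (_ : a.+1%:Z + b.+1%:Z - n%:Z - 1 = (a - c.+1)%N); last by lia.
by congr (_ *: _); rewrite !pmulrn -intrM; congr _%:~R; rewrite /c in ltca *; lia.
Qed.

Lemma mpoly_eq0_on_uvec (T : {mpoly R[n]}) :
  (forall p, (forall s, p s != 0) -> T.@[uvec p] = 0) -> T = 0.
Proof.
move=> T0; set S := [tuple mesym n R i.+1 | i < n].
have uvecE p : T.@[uvec p] = (T \mPo S).@[sqrv p].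
  rewrite comp_mpoly_meval; apply: meval_eq => i.
  by rewrite tnth_map tnth_ord_tuple meval_mesym /uvec meval_u_poly.
apply: msym_fundamental_un0.
(* Only squares are reached through [sqrv], so the Kronecker curve is sampled
   at the squares (c+1)^2. *)
apply: (@mpoly_eq0_kronecker _ _ _ (fun c => (c.+1 ^ 2)%:R)) => [c1 c2 /eqP|c].
  by rewrite eqr_nat eqn_exp2r // => /eqP [].
pose p i : R := c.+1%:R ^+ (msize (T \mPo S) ^ i).
rewrite -(T0 p) => [|s]; last by rewrite expf_neq0 // pnatr_eq0.
by rewrite uvecE; apply: meval_eq => i; rewrite /sqrv /p -exprM mulnC exprM natrX.
Qed.

Lemma eta_formulaE i j : eta_formula R n i j = eta_formula R n (i + j) 0.
Proof. by rewrite /eta_formula subn0 subnDA addr0 PoszD. Qed.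

Lemma eta_formula_above i j : (i + j < n.+1)%N -> eta_formula R n i j = 0.
Proof. by move=> ltijn; rewrite /eta_formula Uvar_lt0 ?scaler0 //; lia. Qed.

Lemma eta_formula_antidiag i j :
  (i + j = n.+1)%N -> eta_formula R n i j = (4 * (n - 1))%:R.
Proof.
move=> ijn; rewrite /eta_formula (_ : _ - 1 = 0); last by lia.
by rewrite /Uvar eqxx scaler_nat (_ : 2 * n - i - j = n - 1)%N //; lia.
Qed.

End IntersectionForm.

Theorem mainTheorem8 (R : numFieldType) (n : nat) (hn : (2 <= n)%N)
    (G : 'I_n -> 'I_n -> {mpoly R[n]}) :
  (* G i j is g^{(i+1)(j+1)} viewed as a polynomial in u_1, ..., u_n *)
  (forall (i j : 'I_n) (p : 'I_n -> R), (forall s, p s != 0) ->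
     (G i j).@[uvec p] = gfun i.+1 j.+1 p) ->
  let eta := \matrix_(i < n, j < n) (G i j)^`M(ord_nm1 hn) in
  [/\ (forall i j : 'I_n, eta i j = eta_formula R n i.+1 j.+1),
      (forall i j : 'I_n, (i.+1 + j.+1 < n.+1)%N -> eta i j = 0),
      (forall i j : 'I_n, (i.+1 + j.+1 = n.+1)%N -> eta i j = (4 * (n - 1))%:R),
      (forall i j i' j' : 'I_n, (i + j = i' + j')%N -> eta i j = eta i' j')
    & \det eta != 0].
Proof.
move=> Gu eta.
have G_gpoly i j : G i j = gpoly R n i j.
  apply/subr0_eq/mpoly_eq0_on_uvec => p p_neq0.
  by rewrite mevalB Gu // gfun_gpoly // subrr.
have etaE i j : eta i j = eta_formula R n i.+1 j.+1.
  by rewrite mxE G_gpoly mderiv_gpoly //=; lia.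
have eta_above (i j : 'I_n) : (i.+1 + j.+1 < n.+1)%N -> eta i j = 0.
  by move=> ltijn; rewrite etaE eta_formula_above.
have eta_antidiag (i j : 'I_n) :
    (i.+1 + j.+1 = n.+1)%N -> eta i j = (4 * (n - 1))%:R.
  by move=> ijn; rewrite etaE eta_formula_antidiag.
split => // [i j i' j' ijE|].
  by rewrite !etaE eta_formulaE [RHS]eta_formulaE !addSn !addnS ijE.
apply: det_antitrig_neq0 => [i j ltijn|i]; first by apply: eta_above; lia.
rewrite eta_antidiag /=; last by have := ltn_ord i; lia.
by rewrite -mpolyC_nat mpolyC_eq0 pnatr_eq0; apply/eqP; lia.
Qed.
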